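(* Let $R$ be a finitely stable domain that does not have finite character, let $x\in R$ be nonzero and let $\{I_\alpha\}$ be an infinite family of pairwise comaximal finitely generated ideals of $R$ each containing $x$. Set $E_\alpha=(I_\alpha:I_\alpha)$ and $E=\sum_\alpha E_\alpha$. Then $E$ is a fractional overring of $R$, and $\{I_\alpha E\}$ is an infinite family of pairwise comaximal proper invertible ideals of $E$, each containing $x$.
   Context: Let $R$ be an integral domain with quotient field $K\neq R$. For a nonzero ideal $I$, $(I:I)=\{y\in K: yI\subseteq I\}$. An overring of $R$ is a domain $D$ with $R\subseteq D\subseteq K$; it is fractional if $dD\subseteq R$ for some nonzero $d\in R$. A nonzero ideal $I$ is stable if it is invertible as an ideal of $(I:I)$; $R$ is finitely stable if every nonzero finitely generated ideal is stable. $R$ has finite character if every nonzero element of $R$ lies in only finitely many maximal ideals. Ideals $A,B$ of a ring $S$ are comaximal if $A+B=S$. *)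

From HB Require Import structures.
From mathcomp Require Import all_boot all_order all_algebra.
Set Implicit Arguments. Unset Strict Implicit. Unset Printing Implicit Defensive.
Import GRing.Theory.
Local Open Scope ring_scope.

Section Defs.
Variable K : fieldType.
Definition kset := K -> Prop.

Definition seteq (A B : kset) : Prop := forall z, A z <-> B z.
Definition subset (A B : kset) : Prop := forall z, A z -> B z.

(* S is a subring of K (hence a domain, with quotient field inside K) *)
Definition is_subring (S : kset) : Prop :=
  [/\ S 0, S 1, (forall a b, S a -> S b -> S (a - b)) &
      (forall a b, S a -> S b -> S (a * b))].

Definition quot_field_of (S : kset) : Prop :=
  forall z, exists a b, [/\ S a, S b, b != 0 & z = a / b].

Definition ideal_of (D I : kset) : Prop :=
  [/\ subset I D, I 0, (forall a b, I a -> I b -> I (a + b)) &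
      (forall d a, D d -> I a -> I (d * a))].

Definition nonzero_set (I : kset) : Prop := exists a, I a /\ a != 0.

Definition gen_ideal (D : kset) n (g : 'I_n -> K) : kset :=
  fun z => exists d : 'I_n -> K, (forall i, D (d i)) /\ z = \sum_(i < n) d i * g i.

Definition fg_ideal (D I : kset) : Prop :=
  ideal_of D I /\ exists n (g : 'I_n -> K), (forall i, D (g i)) /\ seteq I (gen_ideal D g).

Definition colon (A B : kset) : kset := fun y => forall b, B b -> A (y * b).

Definition prodset (A B : kset) : kset :=
  fun z => exists n (a b : 'I_n -> K),
    (forall i, A (a i) /\ B (b i)) /\ z = \sum_(i < n) a i * b i.

Definition sumfam (A : Type) (F : A -> kset) : kset :=
  fun z => exists n (al : 'I_n -> A) (e : 'I_n -> K),
    (forall i, F (al i) (e i)) /\ z = \sum_(i < n) e i.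

Definition invertible_ideal (D I : kset) : Prop :=
  ideal_of D I /\ seteq (prodset I (colon D I)) D.

Definition stable_ideal (R I : kset) : Prop :=
  ideal_of R I /\ nonzero_set I /\ invertible_ideal (colon I I) I.

Definition finitely_stable (R : kset) : Prop :=
  forall I, fg_ideal R I -> nonzero_set I -> stable_ideal R I.

Definition maximal_ideal (R M : kset) : Prop :=
  [/\ ideal_of R M, ~ M 1 &
      forall J, ideal_of R J -> subset M J -> J 1 \/ seteq J M].

Definition finite_character (R : kset) : Prop :=
  forall r, R r -> r != 0 ->
    exists n (Ms : 'I_n -> kset),
      forall M, maximal_ideal R M -> M r -> exists i, seteq M (Ms i).

Definition comaximal (S A B : kset) : Prop :=
  seteq (fun z => exists a b, [/\ A a, B b & z = a + b]) S.

Definition fractional_overring (R D : kset) : Prop :=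
  [/\ is_subring D, subset R D &
      exists d, [/\ R d, d != 0 & forall e, D e -> R (d * e)]].

Definition infinite_type (A : Type) : Prop :=
  exists f : nat -> A, forall m n, f m = f n -> m = n.
End Defs.

(* The proof rests on three observations.
   1. Comaximality makes E a ring: for y in E_a, z in E_b (a <> b) write 1 = u + v with
      u in I_a, v in I_b; then yz = z(yu) + y(zv) with yu, zv in R, so yz in E_b + E_a.
      Moreover x E_a lies in I_a, a subset of R, so x E lies in R: E is fractional.
   2. Extension of ideals to an overring E: if 1 lies in J (D : J) for a ring D inside E,
      then JE is invertible in E; and comaximal ideals extend to comaximal ideals.
      Stability of the finitely generated ideal I_a gives 1 in I_a (E_a : I_a).
   3. Properness: call z "almost in S modulo I" if (1 - u) z lies in S for some u in I.
      Every element of E is almost in E_a modulo I_a (the summands E_b, b <> a, are killed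
      by v = 1 - u in I_b), hence every element of I_a E is almost in I_a modulo I_a;
      and 1 almost in I_a modulo I_a forces 1 in I_a. *)
From Pilot Require Import Defs.
From HB Require Import structures.
From mathcomp Require Import all_boot all_order all_algebra ring.
From Stdlib Require Import Classical.
Set Implicit Arguments. Unset Strict Implicit.
Import GRing.Theory.
Local Open Scope ring_scope.

Section FiniteSums.
Variable K : fieldType.

Definition catf (T : Type) n1 n2 (f1 : 'I_n1 -> T) (f2 : 'I_n2 -> T) (i : 'I_(n1 + n2)%N) : T :=
  match split i with inl j => f1 j | inr k => f2 k end.

Lemma catf_pairP T U n1 n2 (f1 : 'I_n1 -> T) (f2 : 'I_n2 -> T)
    (g1 : 'I_n1 -> U) (g2 : 'I_n2 -> U) (P : T -> U -> Prop) :
  (forall i, P (f1 i) (g1 i)) -> (forall i, P (f2 i) (g2 i)) ->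
  forall i, P (catf f1 f2 i) (catf g1 g2 i).
Proof. by move=> H1 H2 i; rewrite /catf; case: split. Qed.

Lemma catf_pair T U V n1 n2 (G : T -> U -> V) (f1 : 'I_n1 -> T) (f2 : 'I_n2 -> T)
    (g1 : 'I_n1 -> U) (g2 : 'I_n2 -> U) i :
  G (catf f1 f2 i) (catf g1 g2 i) = catf (fun j => G (f1 j) (g1 j)) (fun j => G (f2 j) (g2 j)) i.
Proof. by rewrite /catf; case: split. Qed.

Lemma sum_catf n1 n2 (f1 : 'I_n1 -> K) (f2 : 'I_n2 -> K) :
  \sum_(i < (n1 + n2)%N) catf f1 f2 i = \sum_(i < n1) f1 i + \sum_(i < n2) f2 i.
Proof.
rewrite big_split_ord; congr (_ + _); apply: eq_bigr => i _.
  by rewrite /catf (unsplitK (inl i)).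
by rewrite /catf (unsplitK (inr i)).
Qed.

Lemma sumfam_in (A : Type) (F : A -> kset K) a z : F a z -> sumfam F z.
Proof. by move=> Hz; exists 1%N, (fun _ => a), (fun _ => z); rewrite big_ord1. Qed.

Lemma sumfamD (A : Type) (F : A -> kset K) y z :
  sumfam F y -> sumfam F z -> sumfam F (y + z).
Proof.
move=> [n1 [a1 [e1 [H1 ->]]]] [n2 [a2 [e2 [H2 ->]]]].
exists (n1 + n2)%N, (catf a1 a2), (catf e1 e2); rewrite sum_catf; split => //.
exact: (catf_pairP (P := fun a e => F a e)).
Qed.

Lemma sumfam_ind (A : Type) (F : A -> kset K) (P : K -> Prop) :
  P 0 -> (forall y z, P y -> P z -> P (y + z)) -> (forall a z, F a z -> P z) ->
  forall z, sumfam F z -> P z.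
Proof.
move=> P0 PD PF z [n [al [e [He ->]]]].
by elim/big_ind: _ => // i _; apply: PF (He i).
Qed.

Lemma prodset0 (X Y : kset K) : prodset X Y 0.
Proof.
by exists 0%N, (fun _ => 0), (fun _ => 0); rewrite big_ord0; split => // -[].
Qed.

Lemma prodset_in (X Y : kset K) a b : X a -> Y b -> prodset X Y (a * b).
Proof. by move=> Ha Hb; exists 1%N, (fun _ => a), (fun _ => b); rewrite big_ord1. Qed.

Lemma prodsetD (X Y : kset K) y z :
  prodset X Y y -> prodset X Y z -> prodset X Y (y + z).
Proof.
move=> [n1 [a1 [b1 [H1 ->]]]] [n2 [a2 [b2 [H2 ->]]]].
exists (n1 + n2)%N, (catf a1 a2), (catf b1 b2).
rewrite (eq_bigr _ (fun i _ => catf_pair *%R a1 a2 b1 b2 i)) sum_catf; split => //.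
exact: (catf_pairP (P := fun a b => X a /\ Y b)).
Qed.

Lemma prodset_ind (X Y : kset K) (P : K -> Prop) :
  P 0 -> (forall y z, P y -> P z -> P (y + z)) -> (forall a b, X a -> Y b -> P (a * b)) ->
  forall z, prodset X Y z -> P z.
Proof.
move=> P0 PD PM z [n [a [b [Hab ->]]]].
by elim/big_ind: _ => // i _; case: (Hab i) => ??; apply: PM.
Qed.

End FiniteSums.

Section SubringFacts.
Variables (K : fieldType) (S : kset K).
Hypothesis HS : is_subring S.

Lemma subring0 : S 0. Proof. by case: HS. Qed.
Lemma subring1 : S 1. Proof. by case: HS. Qed.
Lemma subringB a b : S a -> S b -> S (a - b). Proof. by case: HS => _ _ H _; apply: H. Qed.
Lemma subringM a b : S a -> S b -> S (a * b). Proof. by case: HS => _ _ _ H; apply: H. Qed.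
Lemma subringN a : S a -> S (- a).
Proof. by move=> Ha; rewrite -sub0r; apply: subringB => //; apply: subring0. Qed.
Lemma subringD a b : S a -> S b -> S (a + b).
Proof. by move=> Ha Hb; rewrite -[b]opprK; apply: subringB => //; apply: subringN. Qed.

End SubringFacts.

Section IdealFacts.
Variables (K : fieldType) (D J : kset K).
Hypotheses (HD : is_subring D) (HJ : ideal_of D J).

Lemma ideal_sub z : J z -> D z. Proof. by case: HJ => H _ _ _; apply: H. Qed.
Lemma ideal0 : J 0. Proof. by case: HJ. Qed.
Lemma idealD y z : J y -> J z -> J (y + z). Proof. by case: HJ => _ _ H _; apply: H. Qed.
Lemma idealMl d z : D d -> J z -> J (d * z). Proof. by case: HJ => _ _ _ H; apply: H. Qed.
Lemma idealN z : J z -> J (- z).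
Proof. by move=> Hz; rewrite -mulN1r; apply: idealMl => //; apply/(subringN HD)/(subring1 HD). Qed.
Lemma idealB y z : J y -> J z -> J (y - z).
Proof. by move=> Hy Hz; apply: idealD => //; apply: idealN. Qed.

Lemma colon_contains : Defs.subset D (colon J J).
Proof. by move=> r Hr b Hb; apply: idealMl. Qed.

Lemma colon_subring : is_subring (colon J J).
Proof.
split=> [b _|b Hb|y z Hy Hz b Hb|y z Hy Hz b Hb].
- by rewrite mul0r; apply: ideal0.
- by rewrite mul1r.
- by rewrite mulrBl; apply: idealB; [apply: Hy | apply: Hz].
- by rewrite -mulrA; apply: Hy; apply: Hz.
Qed.

End IdealFacts.

(* Extension J E of a subset J of a subring E of K.  (MathComp also defines a
   [subset], hence the qualified name Defs.subset.) *)
Section Extension.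
Variables (K : fieldType) (E : kset K).
Hypothesis HE : is_subring E.

Lemma ext_ideal (J : kset K) : Defs.subset J E -> ideal_of E (prodset J E).
Proof.
move=> HJE; split; [|exact: prodset0|by move=> ???; apply: prodsetD|].
  apply: prodset_ind; [exact: (subring0 HE) | by move=> ????; apply: (subringD HE) |].
  by move=> a b Ha Hb; apply: (subringM HE) => //; apply: HJE.
move=> d z Hd; move: z; apply: (prodset_ind (P := fun z => prodset J E (d * z))).
- by rewrite mulr0; apply: prodset0.
- by move=> ????; rewrite mulrDr; apply: prodsetD.
by move=> a b Ha Hb; rewrite mulrCA; apply: prodset_in => //; apply: (subringM HE).
Qed.

Lemma ext_contains (J : kset K) z : J z -> prodset J E z.
Proof. by move=> Hz; rewrite -[z]mulr1; apply: prodset_in => //; apply: (subring1 HE). Qed.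

Lemma ext_invertible (D J : kset K) : Defs.subset D E -> Defs.subset J E ->
  prodset J (colon D J) 1 -> invertible_ideal E (prodset J E).
Proof.
move=> HDE HJE H1; split; first exact: ext_ideal.
(* J E (E : J E) lies in E by definition of the colon; conversely z = 1 z with
   1 = sum c y, c in J, y J in D, and each c (y z) is in J E (E : J E). *)
move=> z; split.
  apply: prodset_ind; [exact: (subring0 HE) | by move=> ????; apply: (subringD HE) |].
  by move=> p q Hp Hq; rewrite mulrC; apply: Hq.
move=> Hz; rewrite -[z]mul1r; move: 1 H1; apply: prodset_ind.
- by rewrite mul0r; apply: prodset0.
- by move=> ????; rewrite mulrDl; apply: prodsetD.
move=> c y Hc Hy; rewrite -mulrA; apply: prodset_in; first exact: ext_contains.
apply: prodset_ind.
- by rewrite mulr0; apply: (subring0 HE).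
- by move=> ????; rewrite mulrDr; apply: (subringD HE).
move=> i e Hi He; rewrite mulrACA; apply: (subringM HE); last exact: (subringM HE).
by apply: HDE; apply: Hy.
Qed.

Lemma ext_comaximal (J1 J2 : kset K) u v : Defs.subset J1 E -> Defs.subset J2 E ->
  J1 u -> J2 v -> 1 = u + v -> comaximal E (prodset J1 E) (prodset J2 E).
Proof.
move=> HJ1 HJ2 Hu Hv Huv z; split.
  move=> [p [q [Hp Hq ->]]].
  apply: (subringD HE); [exact: (ideal_sub (ext_ideal HJ1) Hp)
                        | exact: (ideal_sub (ext_ideal HJ2) Hq)].
move=> Hz; exists (u * z), (v * z); split; try exact: prodset_in.
by rewrite -mulrDl -Huv mul1r.
Qed.

End Extension.

Definition almost (K : fieldType) (I S : kset K) (z : K) : Prop :=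
  exists u, I u /\ S ((1 - u) * z).

Section Almost.
Variables (K : fieldType) (R I S : kset K).
Hypotheses (HR : is_subring R) (HI : ideal_of R I).
Hypotheses (HSD : forall y z, S y -> S z -> S (y + z))
           (HSM : forall r z, R r -> S z -> S (r * z)).

Lemma almost_of_mem z : S z -> almost I S z.
Proof. by move=> Hz; exists 0; rewrite subr0 mul1r; split => //; exact: ideal0 HI. Qed.

Lemma almostD y z : almost I S y -> almost I S z -> almost I S (y + z).
Proof.
move=> [u1 [H1 Hy]] [u2 [H2 Hz]].
have HRu : forall u, I u -> R (1 - u).
  by move=> u Hu; apply: subringB (subring1 HR) (ideal_sub HI Hu).
exists (u1 + u2 - u1 * u2); split.
  apply: (idealB HR HI); first exact: (idealD HI H1 H2).
  exact: (idealMl HI (ideal_sub HI H1) H2).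
have -> : (1 - (u1 + u2 - u1 * u2)) * (y + z)
    = (1 - u2) * ((1 - u1) * y) + (1 - u1) * ((1 - u2) * z) by ring.
by apply: HSD; apply: HSM => //; apply: HRu.
Qed.

End Almost.

Lemma almost_self_one (K : fieldType) (R I : kset K) :
  ideal_of R I -> almost I I 1 -> I 1.
Proof.
move=> HI [u [Hu H]].
have -> : 1 = (1 - u) * 1 + u :> K by ring.
exact: (idealD HI H Hu).
Qed.

Lemma stable_one (K : fieldType) (R J : kset K) :
  stable_ideal R J -> prodset J (colon (colon J J) J) 1.
Proof. by move=> [_ [_ [_ HJ]]]; apply/HJ => b Hb; rewrite mul1r. Qed.

Section SumOfColons.
Variables (K : fieldType) (R : kset K) (A : Type) (I : A -> kset K).
Hypotheses (HR : is_subring R) (HI : forall a, ideal_of R (I a)).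
Hypothesis Hcom : forall a b, a <> b -> comaximal R (I a) (I b).
Variable a0 : A.

Let Ec a := colon (I a) (I a).
Let E := sumfam Ec.

Lemma comax_split a b : a <> b -> exists u v, [/\ I a u, I b v & 1 = u + v].
Proof. by move=> /Hcom /(_ 1) [_ /(_ (subring1 HR))] [u [v [? ? ->]]]; exists u, v. Qed.

Lemma R_sub_E : Defs.subset R E.
Proof. by move=> r Hr; apply: (sumfam_in (a := a0)); apply: (colon_contains (HI a0)). Qed.

Lemma I_sub_E a : Defs.subset (I a) E.
Proof. by move=> z Hz; apply: R_sub_E; apply: (ideal_sub (HI a)). Qed.

Lemma E_mul_colons a b y z : Ec a y -> Ec b z -> E (y * z).
Proof.
move=> Hy Hz; have [Hab|Hab] := classic (a = b).
  by subst b; apply: (sumfam_in (a := a)); apply: (subringM (colon_subring HR (HI a))).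
have [u [v [Hu Hv Huv]]] := comax_split Hab.
have -> : y * z = z * (y * u) + y * (z * v) by rewrite -[LHS]mulr1 Huv; ring.
have Hyu : R (y * u) := ideal_sub (HI a) (Hy u Hu).
have Hzv : R (z * v) := ideal_sub (HI b) (Hz v Hv).
apply: sumfamD; [apply: (sumfam_in (a := b)) | apply: (sumfam_in (a := a))].
  exact: (subringM (colon_subring HR (HI b)) Hz (colon_contains (HI b) Hyu)).
exact: (subringM (colon_subring HR (HI a)) Hy (colon_contains (HI a) Hzv)).
Qed.

Lemma E_subring : is_subring E.
Proof.
have HEN : forall z, E z -> E (- z).
  apply: sumfam_ind; first by rewrite oppr0; apply: R_sub_E; apply: (subring0 HR).
    by move=> ????; rewrite opprD; apply: sumfamD.
  by move=> a z Hz; apply: (sumfam_in (a := a)); exact: (subringN (colon_subring HR (HI a)) Hz).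
split; [exact/R_sub_E/(subring0 HR) | exact/R_sub_E/(subring1 HR) | |].
  by move=> y z Hy Hz; apply: sumfamD => //; apply: HEN.
move=> y z Hy Hz; move: y Hy; apply: sumfam_ind.
- by rewrite mul0r; apply/R_sub_E/(subring0 HR).
- by move=> ????; rewrite mulrDl; apply: sumfamD.
move=> a y Hy; move: z Hz; apply: sumfam_ind.
- by rewrite mulr0; apply/R_sub_E/(subring0 HR).
- by move=> ????; rewrite mulrDr; apply: sumfamD.
by move=> b z Hz; apply: E_mul_colons Hy Hz.
Qed.

Lemma E_fractional x : R x -> x != 0 -> (forall a, I a x) -> fractional_overring R E.
Proof.
move=> Hx Hx0 HIx; split; [exact: E_subring | exact: R_sub_E |].
exists x; split => //; apply: sumfam_ind.
- by rewrite mulr0; apply: (subring0 HR).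
- by move=> ????; rewrite mulrDr; apply: (subringD HR).
by move=> a e He; apply: (ideal_sub (HI a)); rewrite mulrC; apply: He.
Qed.

Lemma E_almost a z : E z -> almost (I a) (Ec a) z.
Proof.
have HEc := colon_subring HR (HI a).
have HEcD : forall y z, Ec a y -> Ec a z -> Ec a (y + z) := subringD HEc.
have HEcM : forall r y, R r -> Ec a y -> Ec a (r * y).
  by move=> r y Hr Hy; apply: (subringM HEc) => //; apply: (colon_contains (HI a)).
move: z; apply: (sumfam_ind (P := almost (I a) (Ec a))).
- exact: (almost_of_mem (HI a) (subring0 HEc)).
- exact: (almostD HR (HI a) HEcD HEcM).
move=> b y Hy; have [Hba|Hba] := classic (b = a).
  by subst b; apply: (almost_of_mem (HI a)).
have [u [v [Hu Hv Huv]]] := comax_split (nesym Hba).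
exists u; split => //; have -> : 1 - u = v by rewrite Huv; ring.
by apply: (colon_contains (HI a)); apply: (ideal_sub (HI b)); rewrite mulrC; apply: Hy.
Qed.

Lemma ext_almost a z : prodset (I a) E z -> almost (I a) (I a) z.
Proof.
move: z; apply: (prodset_ind (P := almost (I a) (I a))).
- exact: (almost_of_mem (HI a) (ideal0 (HI a))).
- exact: (almostD HR (HI a) (idealD (HI a)) (idealMl (HI a))).
move=> i e Hi He; have [u [Hu Hue]] := E_almost a He.
by exists u; split => //; rewrite mulrCA mulrC; apply: Hue.
Qed.

Lemma ext_proper a : ~ I a 1 -> ~ prodset (I a) E 1.
Proof. by move=> HI1 /ext_almost /(almost_self_one (HI a)). Qed.

End SumOfColons.

(* Only an index a0 of the (infinite) family is needed to see that R lies in E. *)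
Theorem mainTheorem5 (K : fieldType) (R : kset K)
  (A : Type) (I : A -> kset K) (x : K) :
  is_subring R -> quot_field_of R -> (exists k, ~ R k) ->
  finitely_stable R -> ~ finite_character R ->
  R x -> x != 0 ->
  infinite_type A ->
  (forall a, fg_ideal R (I a)) ->
  (forall a, ~ I a 1) ->
  (forall a b, a <> b -> comaximal R (I a) (I b)) ->
  (forall a, I a x) ->
  let E := sumfam (fun a => colon (I a) (I a)) in
  fractional_overring R E /\
  (forall a, invertible_ideal E (prodset (I a) E)) /\
  (forall a, ~ prodset (I a) E 1) /\
  (forall a b, a <> b -> comaximal E (prodset (I a) E) (prodset (I b) E)) /\
  (forall a, prodset (I a) E x).
Proof.
move=> HR _ _ Hfs _ Hx Hx0 [f _] Hfg HI1 Hcom HIx E.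
have HI a : ideal_of R (I a) by case: (Hfg a).
have a0 := f 0%N.
have HE : is_subring E := E_subring HR HI Hcom a0.
have HIE a : Defs.subset (I a) E := I_sub_E HI a0 (a := a).
split; first exact: (E_fractional HR HI Hcom a0 Hx Hx0 HIx).
split.
  move=> a; have HEa : Defs.subset (colon (I a) (I a)) E.
    by move=> z; apply: (sumfam_in (a := a)).
  have Hstable := Hfs _ (Hfg a) (ex_intro _ x (conj (HIx a) Hx0)).
  exact: (ext_invertible HE HEa (HIE a) (stable_one Hstable)).
split; first by move=> a; apply: (ext_proper HR HI Hcom).
split; last by move=> a; apply: (ext_contains HE).
move=> a b Hab; have [u [v [Hu Hv Huv]]] := comax_split HR Hcom Hab.
exact: (ext_comaximal HE (HIE a) (HIE b) Hu Hv Huv).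
Qed.
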